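(* Let $\Gamma=(a_1,\dots,a_m)\in\mathbb{Z}^m$ be a multiset of integers with $a_i=1$ for some $i$. For $n\ge1$ let $\Gamma_n=(k_1,\dots,k_m)$ with $k_i=a_i \bmod n$, viewed as a multiset in $\mathbb{Z}_n$. Then there exists a positive integer $N=N(\Gamma)$ such that for every $n>N$ and every $v\in\mathbb{Z}_n$: if $v\Gamma_n=\Gamma_n$ as multisets, then $v\in\{-1,0,1\}$ (in $\mathbb{Z}_n$).
   Context: For $v\in\mathbb{Z}_n$, $v\Gamma_n$ denotes the multiset $(vk_1,\dots,vk_m)$ with multiplication in $\mathbb{Z}_n$. *)

From mathcomp Require Import all_boot all_order all_algebra.
Set Implicit Arguments. Unset Strict Implicit. Unset Printing Implicit Defensive.
Import GRing.Theory.
Local Open Scope ring_scope.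

(* Gamma_n : the multiset (a_1 mod n, ..., a_m mod n) in Z_n, as a sequence
   (multiset equality is perm_eq). Only meaningful for n >= 2. *)
Definition Gamma_mod (n : nat) (Gamma : seq int) : seq 'Z_n :=
  [seq (a%:~R : 'Z_n) | a <- Gamma].

Definition scale_mset (n : nat) (v : 'Z_n) (s : seq 'Z_n) : seq 'Z_n :=
  [seq v * k | k <- s].

From mathcomp Require Import all_boot all_order all_algebra.
From mathcomp Require Import zify.
Set Implicit Arguments. Unset Strict Implicit. Unset Printing Implicit Defensive.
Import GRing.Theory Num.Theory.
Local Open Scope ring_scope.

(* Since 1 is in Gamma, the multiplier v = v * 1 is itself some c mod n with
   c in Gamma.  Take a in Gamma of maximal absolute value A; then v * a is
   some b mod n with b in Gamma, i.e. c * a = b mod n.  As |c * a - b| is at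
   most A^2 + A, for n > A^2 + A this congruence is an equality of integers,
   so |c| A = |b| <= A and |c| <= 1. *)

Lemma exists_argmaxn (T : eqType) (f : T -> nat) (s : seq T) : s != [::] ->
  exists2 x, x \in s & forall y, y \in s -> (f y <= f x)%N.
Proof.
elim: s => [//|x [|y s] IH] _.
  by exists x => [|z]; rewrite ?mem_head // mem_seq1 => /eqP ->.
have [z zs zmax] := IH isT.
have [fxz | fzx] := leqP (f x) (f z).
  exists z => [|w]; first by rewrite in_cons zs orbT.
  by rewrite in_cons => /predU1P [-> //|]; apply: zmax.
exists x => [|w]; first exact: mem_head.
by rewrite in_cons => /predU1P [-> //| /zmax /leq_trans]; apply; apply: ltnW.
Qed.

Lemma mem_map_perm_eq (T : eqType) (f : T -> T) (s : seq T) (x : T) :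
  perm_eq [seq f y | y <- s] s -> x \in s -> f x \in s.
Proof. by move=> fs xs; rewrite -(perm_mem fs) map_f. Qed.

Lemma intr_Zp_eq0 (n : nat) (z : int) : (1 < n)%N -> (`|z| < n)%N ->
  (z%:~R : 'Z_n) = 0 -> z = 0.
Proof.
move=> n_gt1 zn; case: z zn => k /= kn.
  by move=> /(congr1 val); rewrite [LHS](val_Zp_nat n_gt1) modn_small //= => ->.
rewrite NegzE mulrNz => /eqP; rewrite oppr_eq0 => /eqP /(congr1 val).
by rewrite [LHS](val_Zp_nat n_gt1) modn_small //.
Qed.

Lemma Zp_mul_congr_absz_le1 (n : nat) (a b c : int) :
  a != 0 -> (`|a| * `|a| + `|a| < n)%N ->
  (`|b| <= `|a|)%N -> (`|c| <= `|a|)%N ->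
  ((c * a)%:~R : 'Z_n) = b%:~R -> (`|c| <= 1)%N.
Proof.
move=> a_nz an ba ca cab.
have a_gt0 : (0 < `|a|)%N by rewrite absz_gt0.
have cab_small : (`|(c * a - b)%R| < n)%N.
  have : (`|(c * a)%R| <= `|a| * `|a|)%N by rewrite abszM leq_mul.
  lia.
have /eqP : c * a - b = 0.
  apply: (@intr_Zp_eq0 n) cab_small _; first lia.
  by rewrite intrB cab subrr.
rewrite subr_eq0 => /eqP cab_eq.
by rewrite -(leq_pmul2r a_gt0) mul1n -abszM cab_eq.
Qed.

Lemma intr_absz_le1 (R : pzRingType) (c : int) :
  (`|c| <= 1)%N -> (c%:~R : R) \in [:: -1; 0; 1].
Proof. by case: c => [[|[|k]]|[|k]] //= _; rewrite !inE eqxx ?orbT. Qed.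

Theorem lemma3 (Gamma : seq int) :
  (1 \in Gamma) ->
  exists N : nat, (0 < N)%N /\
    forall n : nat, (N < n)%N ->
    forall v : 'Z_n,
      perm_eq (scale_mset v (Gamma_mod n Gamma)) (Gamma_mod n Gamma) ->
      v \in [:: -1; 0; 1].
Proof.
move=> Gamma1.
have Gamma_nz : Gamma != [::] by case: Gamma Gamma1.
have [a aG amax] := exists_argmaxn (fun x : int => `|x|%N) Gamma_nz.
exists (`|a| * `|a| + `|a|).+1; split => // n an v vG.
have scaled_mem x : x \in Gamma -> v * x%:~R \in Gamma_mod n Gamma.
  by move=> xG; apply: mem_map_perm_eq vG _; apply: map_f.
have /mapP [c cG v_c] : v \in Gamma_mod n Gamma.
  by rewrite -[v]mulr1; apply: scaled_mem 1 Gamma1.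
have /mapP [b bG cab] := scaled_mem a aG.
rewrite v_c; apply: intr_absz_le1.
apply: (Zp_mul_congr_absz_le1 _ (ltnW an) (amax b bG) (amax c cG)).
  by rewrite -absz_eq0; have := amax 1 Gamma1; case: `|a|%N.
by rewrite intrM -v_c cab.
Qed.
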